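(* Let $a,b,c$ be positive numbers with $a<b<c$, $\lfloor c/b\rfloor\ge2$, $b-a<c_0<a$ and $0\le c_1\le2a-b$, where $c_0=c-\lfloor c/b\rfloor b$ and $c_1=c-c_0-\lfloor(c-c_0)/a\rfloor a$. Suppose $\mathcal S_{a,b,c}\ne\emptyset$ and either $a/b\notin\mathbb Q$, or $a/b=p/q$ and $c\in(b/q)\mathbb Z$ for some coprime positive integers $p,q$. Then $$\Big(\big(\mathcal S_{a,b,c}\cap([0,c_0+a-b)+a\mathbb Z)\big)+\lfloor c/b\rfloor b\Big)\cup\bigcup_{k=0}^{\lfloor c/b\rfloor-1}(\mathcal S_{a,b,c}+kb)=\mathbb R.$$
   Context: For $a,b,c>0$ and $t\in\mathbb R$, $\mathbf M_{a,b,c}(t)=(\chi_{[0,c)}(t-\mu+\lambda))_{\mu\in a\mathbb Z,\lambda\in b\mathbb Z}$ is the infinite matrix with rows indexed by $a\mathbb Z$ and columns by $b\mathbb Z$, acting by $(\mathbf M_{a,b,c}(t)\mathbf x)(\mu)=\sum_{\lambda\in b\mathbb Z}\chi_{[0,c)}(t-\mu+\lambda)\mathbf x(\lambda)$. $\mathcal B_b^0$ is the set of vectors $(\mathbf x(\lambda))_{\lambda\in b\mathbb Z}$ with entries in $\{0,1\}$ and $\mathbf x(0)=1$. $\mathbf 1$ denotes the vector indexed by $a\mathbb Z$ with all entries $1$. $\mathcal S_{a,b,c}=\{t:\mathbf M_{a,b,c}(t)\mathbf x=\mathbf 1\text{ for some }\mathbf x\in\mathcal B_b^0\}$. For $A\subset\mathbb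 R$, $A+r=\{x+r:x\in A\}$ and $A+a\mathbb Z=\{x+ak:x\in A,k\in\mathbb Z\}$. *)

From Stdlib Require Import Reals ZArith.
Open Scope R_scope.

Definition in_co (c s : R) : Prop := 0 <= s < c.

(* floor function on R (Int_part r = up r - 1 = floor r). *)
Definition floorR (r : R) : Z := Int_part r.

(* A vector x in B_b^0: indexed by lambda = b*n (n : Z), entries in {0,1}
   encoded as bool, with x(0) = 1. *)
Definition in_B0 (x : Z -> bool) : Prop := x 0%Z = true.

(* (M_{a,b,c}(t) x)(mu) for mu = a*m is the sum over n : Z of
   chi_[0,c)(t - a m + b n) * x(b n). All terms are 0 or 1, so this sum
   equals 1 iff exactly one index n gives a term equal to 1. *)
Definition Mx_eq_one_at (a b c t : R) (x : Z -> bool) (m : Z) : Prop :=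
  exists n : Z,
    (x n = true /\ in_co c (t - a * IZR m + b * IZR n)) /\
    forall n' : Z, x n' = true -> in_co c (t - a * IZR m + b * IZR n') -> n' = n.

Definition Mx_eq_one (a b c t : R) (x : Z -> bool) : Prop :=
  forall m : Z, Mx_eq_one_at a b c t x m.

Definition S_abc (a b c t : R) : Prop :=
  exists x : Z -> bool, in_B0 x /\ Mx_eq_one a b c t x.

(* Write N = floor (c / b) and c0 = c - N b.  The proof only uses 0 < a < b,
   c0 < a, the existence of a point of S and the arithmetic dichotomy on a/b.

   1. Reduction.  S is invariant under aZ, and t + b n1 lies in S whenever n1 is
      in the support of a solution at t.  The row of the system whose window ends
      just above a column n contains a support entry n1 with 0 <= n - n1 <= N; in
      the extreme case n - n1 = N the next row forces t + b n1 into
      [0, c0 + a - b) + aZ.  Hence every point of S + aZ + bZ is t' + j b with t'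
      in S and 0 <= j <= N, and t' in [0, c0 + a - b) + aZ when j = N.
   2. Covering: S + aZ + bZ = R.
      - Rational case (a/b = p/q, c in (b/q)Z): membership in S only depends on
        the cell of t in the grid (b/q)Z, and aZ + bZ = (b/q)Z by Bezout.
      - Irrational case: aZ + bZ is dense, S is closed from the right (compactness
        of {0,1}^Z), and by density and step 1, S accumulates from the right at
        one of y, y - b, ..., y - N b.
   The theorem is step 1 applied to the covering of step 2. *)
From Stdlib Require Import Reals ZArith Lra Lia ClassicalEpsilon Classical.
Open Scope R_scope.

Lemma Int_part_bounds (r : R) : IZR (Int_part r) <= r < IZR (Int_part r) + 1.
Proof. destruct (base_Int_part r). lra. Qed.

Lemma lattice_cell (a v : R) : 0 < a -> exists m : Z, a * IZR m <= v < a * IZR m + a.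
Proof.
  intro Ha. exists (Int_part (v / a)).
  destruct (Int_part_bounds (v / a)) as [Hlo Hhi].
  assert (Ev : v = a * (v / a)) by (field; lra).
  split; [rewrite Ev at 2; apply Rmult_le_compat_l; lra|].
  rewrite Ev at 1. nra.
Qed.

Lemma Zlt_scaled (b : R) (u v : Z) : 0 < b -> b * IZR u < b * IZR v -> (u < v)%Z.
Proof. intros Hb H. apply lt_IZR, (Rmult_lt_reg_l b); assumption. Qed.

Lemma S_abc_shift_a (a b c t : R) (j : Z) : S_abc a b c t -> S_abc a b c (t + a * IZR j).
Proof.
  intros [x [Hx0 Hx]]. exists x. split; [exact Hx0|]. intro m.
  destruct (Hx (m - j)%Z) as [n [[Hxn Hin] Huniq]]. exists n.
  assert (E : forall n', t + a * IZR j - a * IZR m + b * IZR n'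
                         = t - a * IZR (m - j) + b * IZR n')
    by (intro; rewrite minus_IZR; ring).
  rewrite E. split; [split; assumption|].
  intros n' Hxn' Hin'. rewrite E in Hin'. exact (Huniq n' Hxn' Hin').
Qed.

(* Translating t by b n1 for n1 in the support of a solution x gives a point of S:
   the shifted vector x(. + n1) again solves the system and has value 1 at 0. *)
Lemma S_abc_shift_support (a b c t : R) (x : Z -> bool) (n1 : Z) :
  Mx_eq_one a b c t x -> x n1 = true -> S_abc a b c (t + b * IZR n1).
Proof.
  intros Hx Hn1. exists (fun n => x (n + n1)%Z). split; [exact Hn1|]. intro m.
  destruct (Hx m) as [n [[Hxn Hin] Huniq]]. exists (n - n1)%Z.
  assert (E : forall n', t + b * IZR n1 - a * IZR m + b * IZR n'
                         = t - a * IZR m + b * IZR (n' + n1))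
    by (intro; rewrite plus_IZR; ring).
  rewrite E, Z.sub_add. split; [split; assumption|].
  intros n' Hxn' Hin'. rewrite E in Hin'. specialize (Huniq _ Hxn' Hin'). lia.
Qed.

Lemma row_transfer (a b c t t' : R) (x x' : Z -> bool) (m : Z) :
  (forall n, in_co c (t - a * IZR m + b * IZR n) <-> in_co c (t' - a * IZR m + b * IZR n)) ->
  (forall n, in_co c (t - a * IZR m + b * IZR n) -> x n = x' n) ->
  Mx_eq_one_at a b c t x m -> Mx_eq_one_at a b c t' x' m.
Proof.
  intros Hwin Hagree [n [[Hxn Hin] Huniq]]. exists n.
  split; [split|].
  - rewrite <- (Hagree n Hin). exact Hxn.
  - apply Hwin. exact Hin.
  - intros n' Hxn' Hin'. apply Hwin in Hin'.
    apply Huniq; [rewrite (Hagree n' Hin')|]; assumption.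
Qed.

(* Two consecutive rows m, m+1 of a solution: if the support entry n1 of row m
   sits at height r = t - a m + b n1 < a, then the support entry n2 of row m+1
   cannot be seen by row m, so it lies at height in [c, c + a) relative to row m. *)
Lemma next_row_jump (a b c t : R) (x : Z -> bool) (m n1 : Z) :
  0 < a -> Mx_eq_one a b c t x -> x n1 = true ->
  in_co c (t - a * IZR m + b * IZR n1) -> t - a * IZR m + b * IZR n1 < a ->
  exists n2, x n2 = true /\ c <= t - a * IZR m + b * IZR n2 < c + a.
Proof.
  intros Ha Hx Hn1 Hin1 Hsmall.
  destruct (Hx (m + 1)%Z) as [n2 [[Hn2 [Hlo Hhi]] _]].
  rewrite plus_IZR, Rmult_plus_distr_l, Rmult_1_r in Hlo, Hhi.
  exists n2. split; [exact Hn2|]. split; [|lra].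
  destruct (Rlt_or_le (t - a * IZR m + b * IZR n2) c) as [Hlt|Hge]; [|exact Hge].
  destruct (Hx m) as [n [_ Huniq]].
  assert (Hsame : n2 = n1).
  { rewrite (Huniq n2 Hn2), (Huniq n1 Hn1 Hin1); [reflexivity|]. split; lra. }
  subst n2. lra.
Qed.

Section Reduction.

Variables (a b c : R) (N : Z).
Hypotheses (Ha : 0 < a) (Hab : a < b) (Hc0 : c - IZR N * b < a).

Lemma support_below (t : R) (x : Z -> bool) (n : Z) :
  Mx_eq_one a b c t x ->
  exists n1, x n1 = true /\ (0 <= n - n1 <= N)%Z /\
    ((n - n1 = N)%Z -> exists (s : R) (i : Z),
       0 <= s < (c - IZR N * b) + a - b /\ t + b * IZR n1 = s + a * IZR i).
Proof.
  intros Hx.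
  (* choose the row m whose window ends just above column n *)
  destruct (lattice_cell a (t + b * IZR n - c + a) Ha) as [m Hm].
  destruct (Hx m) as [n1 [[Hn1 Hin1] _]].
  pose proof Hin1 as [Hr0 Hrc].
  exists n1. split; [exact Hn1|].
  assert (Hle : (n1 < n + 1)%Z).
  { apply (Zlt_scaled b); [lra|]. rewrite plus_IZR. nra. }
  assert (Hge : (n - n1 < N + 1)%Z).
  { apply (Zlt_scaled b); [lra|]. rewrite minus_IZR, plus_IZR. nra. }
  split; [lia|].
  intros HnN. exists (t - a * IZR m + b * IZR n1), m. split; [|ring].
  (* the row m sees n1 at height r and column n at height r + N b *)
  assert (Hbn : b * IZR n = b * IZR n1 + IZR N * b)
    by (replace n with (n1 + N)%Z by lia; rewrite plus_IZR; ring).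
  split; [exact Hr0|].
  destruct (Rlt_or_le (t - a * IZR m + b * IZR n1) (c - IZR N * b + a - b))
    as [Hlt|Hbig]; [exact Hlt|].
  (* otherwise the support entry of row m+1 would be strictly between N and N+1
     steps above n1 *)
  exfalso.
  destruct (next_row_jump a b c t x m n1 Ha Hx Hn1 Hin1) as [n2 [_ Hn2]]; [lra|].
  assert (HNlt : (N < n2 - n1)%Z).
  { apply (Zlt_scaled b); [lra|]. rewrite minus_IZR. nra. }
  assert (Hlt : (n2 - n1 < N + 1)%Z).
  { apply (Zlt_scaled b); [lra|]. rewrite minus_IZR, plus_IZR. nra. }
  lia.
Qed.

Lemma reduce_translate (t : R) (m n : Z) : S_abc a b c t ->
  exists j : Z, (0 <= j <= N)%Z /\
    S_abc a b c (t + a * IZR m + b * IZR n - b * IZR j) /\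
    ((j = N)%Z -> exists (s : R) (i : Z), 0 <= s < (c - IZR N * b) + a - b /\
                   t + a * IZR m + b * IZR n - b * IZR j = s + a * IZR i).
Proof.
  intros [x [_ Hx]].
  destruct (support_below t x n Hx) as [n1 [Hn1 [Hrange Hextreme]]].
  assert (Ept : t + a * IZR m + b * IZR n - b * IZR (n - n1)
                = t + b * IZR n1 + a * IZR m) by (rewrite minus_IZR; ring).
  exists (n - n1)%Z. rewrite Ept. split; [exact Hrange|]. split.
  - apply S_abc_shift_a, (S_abc_shift_support a b c t x n1 Hx Hn1).
  - intros HnN. destruct (Hextreme HnN) as [s [i [Hs Hi]]].
    exists s, (i + m)%Z. split; [exact Hs|]. rewrite Hi, plus_IZR. ring.
Qed.

End Reduction.

Definition lattice_translates_cover (a b c : R) : Prop :=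
  forall y : R, exists (t : R) (m n : Z), S_abc a b c t /\ y = t + a * IZR m + b * IZR n.

Lemma Int_part_ge (z : Z) (r : R) : IZR z <= r <-> (z <= Int_part r)%Z.
Proof.
  destruct (Int_part_bounds r) as [Hlo Hhi]. split; intro H.
  - apply Z.lt_succ_r, lt_IZR. rewrite succ_IZR. lra.
  - apply IZR_le in H. lra.
Qed.

Lemma Int_part_lt (w : Z) (r : R) : r < IZR w <-> (Int_part r < w)%Z.
Proof.
  rewrite Z.lt_nge, <- Int_part_ge. split; [intros H1 H2; lra|apply Rnot_le_lt].
Qed.

Lemma Int_part_sub_int (r : R) (z : Z) : Int_part (r - IZR z) = (Int_part r - z)%Z.
Proof.
  symmetry. apply Int_part_spec. rewrite minus_IZR.
  destruct (Int_part_bounds r). lra.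
Qed.

Lemma in_co_cells (d t : R) (k z : Z) : 0 < d ->
  in_co (IZR k * d) (t - d * IZR z) <-> (z <= Int_part (t / d) < z + k)%Z.
Proof.
  intro Hd. rewrite <- Int_part_ge, <- Int_part_lt, plus_IZR.
  assert (Et : t - d * IZR z = d * (t / d - IZR z)) by (field; lra).
  rewrite Et. unfold in_co. set (r := t / d).
  split; intros [H1 H2]; split; nra.
Qed.

Lemma S_abc_cell_invariant (a b c d t t' : R) (p q k : Z) :
  0 < d -> a = IZR p * d -> b = IZR q * d -> c = IZR k * d ->
  Int_part (t / d) = Int_part (t' / d) -> S_abc a b c t -> S_abc a b c t'.
Proof.
  intros Hd Ea Eb Ec Hcell [x [Hx0 Hx]]. exists x. split; [exact Hx0|]. intro m.
  apply (row_transfer a b c t t' x x m); [|reflexivity|apply Hx].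
  intro n.
  assert (E : forall s, s - a * IZR m + b * IZR n = s - d * IZR (p * m - q * n))
    by (intro; rewrite minus_IZR, !mult_IZR, Ea, Eb; ring).
  rewrite !E, Ec, !in_co_cells, Hcell by exact Hd. reflexivity.
Qed.

(* Rational case: when a/b = p/q in lowest terms and c is a multiple of d = b/q,
   aZ + bZ = dZ by Bezout, so every real is a dZ-translate of a point in the
   cell of a given point of S. *)
Lemma rational_cover (a b c : R) (p q k : Z) (t0 : R) :
  0 < b -> (0 < q)%Z -> Z.gcd p q = 1%Z ->
  a / b = IZR p / IZR q -> c = IZR k * (b / IZR q) -> S_abc a b c t0 ->
  lattice_translates_cover a b c.
Proof.
  intros Hb Hq Hgcd Hab Hc HS y.
  assert (Hq' : 0 < IZR q) by (apply IZR_lt; lia).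
  set (d := b / IZR q) in *.
  assert (Hd : 0 < d) by (unfold d; apply Rdiv_lt_0_compat; lra).
  assert (Eb : b = IZR q * d) by (unfold d; field; lra).
  assert (Ea : a = IZR p * d).
  { replace a with (a / b * b) by (field; lra). rewrite Hab, Eb. unfold d. field. lra. }
  (* move y by a multiple w of d into the cell of t0 *)
  set (w := (Int_part (y / d) - Int_part (t0 / d))%Z).
  set (t := y - IZR w * d).
  assert (Hcell : Int_part (t0 / d) = Int_part (t / d)).
  { unfold t. replace ((y - IZR w * d) / d) with (y / d - IZR w) by (field; lra).
    rewrite Int_part_sub_int. unfold w. lia. }
  destruct (Z.gcd_bezout p q 1 Hgcd) as [u [v Huv]].
  exists t, (w * u)%Z, (w * v)%Z. split.
  - exact (S_abc_cell_invariant a b c d t0 t p q k Hd Ea Eb Hc Hcell HS).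
  - assert (Hbez : IZR u * IZR p + IZR v * IZR q = 1)
      by (rewrite <- !mult_IZR, <- plus_IZR, Huv; reflexivity).
    unfold t. rewrite !mult_IZR, Ea, Eb.
    transitivity (y - IZR w * d + IZR w * d * (IZR u * IZR p + IZR v * IZR q));
      [rewrite Hbez|]; ring.
Qed.

Definition lattice_point (a b r : R) : Prop := exists m n : Z, r = a * IZR m + b * IZR n.

Lemma lattice_point_sub (a b r s : R) :
  lattice_point a b r -> lattice_point a b s -> lattice_point a b (r - s).
Proof.
  intros [m [n ->]] [m' [n' ->]]. exists (m - m')%Z, (n - n')%Z.
  rewrite !minus_IZR. ring.
Qed.

Lemma lattice_point_mul (a b r : R) (k : Z) :
  lattice_point a b r -> lattice_point a b (IZR k * r).
Proof.
  intros [m [n ->]]. exists (k * m)%Z, (k * n)%Z. rewrite !mult_IZR. ring.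
Qed.

Lemma inf_approx (P : R -> Prop) :
  (exists r, P r) -> (forall r, P r -> 0 <= r) ->
  exists l, (forall r, P r -> l <= r) /\ (forall eps, 0 < eps -> exists r, P r /\ r < l + eps).
Proof.
  intros [r0 Hr0] Hpos.
  set (E := fun s => P (- s)).
  assert (HE : exists s, E s) by (exists (- r0); unfold E; rewrite Ropp_involutive; exact Hr0).
  assert (Hbound : bound E) by (exists 0; intros s Hs; apply Hpos in Hs; lra).
  destruct (completeness E Hbound HE) as [u [Hub Hleast]].
  exists (- u). split.
  - intros r Hr. assert (- r <= u); [apply Hub; unfold E; rewrite Ropp_involutive; exact Hr|lra].
  - intros eps Heps. apply NNPP. intro Hnone.
    assert (u <= u - eps); [|lra].
    apply Hleast. intros s Hs.
    destruct (Rlt_or_le (- s) (- u + eps)) as [Hlt|Hge]; [|lra].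
    exfalso. apply Hnone. exists (- s). split; assumption.
Qed.

(* If every positive element of aZ + bZ is at least l and g1 in aZ + bZ lies in
   (0, 2 l), then aZ + bZ = g1 Z: a nonzero remainder r modulo g1 would give two
   positive elements r and g1 - r of aZ + bZ, both at least l. *)
Lemma lattice_cyclic (a b g1 l : R) :
  lattice_point a b g1 -> 0 < g1 < 2 * l ->
  (forall g, lattice_point a b g -> 0 < g -> l <= g) ->
  forall g, lattice_point a b g -> exists k : Z, g = IZR k * g1.
Proof.
  intros Hg1 [Hg1pos Hg1l] Hmin g Hg.
  destruct (lattice_cell g1 g Hg1pos) as [k [Hklo Hkhi]].
  exists k.
  assert (Hrem : lattice_point a b (g - IZR k * g1))
    by (apply lattice_point_sub, lattice_point_mul; assumption).
  destruct (Req_dec (g - IZR k * g1) 0) as [Hz|Hnz]; [lra|].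
  exfalso.
  assert (Hcompl : lattice_point a b (g1 - (g - IZR k * g1)))
    by (apply lattice_point_sub; assumption).
  assert (l <= g - IZR k * g1) by (apply Hmin; [exact Hrem|lra]).
  assert (l <= g1 - (g - IZR k * g1)) by (apply Hmin; [exact Hcompl|lra]).
  lra.
Qed.

Lemma lattice_small_elements (a b : R) :
  0 < b -> (~ exists p q : Z, (q <> 0)%Z /\ a / b = IZR p / IZR q) ->
  forall eta, 0 < eta -> exists g, lattice_point a b g /\ 0 < g < eta.
Proof.
  intros Hb Hirr.
  destruct (inf_approx (fun g => lattice_point a b g /\ 0 < g)) as [l [Hlow Happrox]].
  - exists b. split; [exists 0%Z, 1%Z; ring|exact Hb].
  - intros r [_ Hr]. lra.
  - destruct (Rle_or_lt l 0) as [Hl0|Hlpos].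
    + intros eta Heta. destruct (Happrox eta Heta) as [g [[Hg Hgpos] Hgl]].
      exists g. split; [exact Hg|lra].
    + exfalso.
      destruct (Happrox l Hlpos) as [g1 [[Hg1 Hg1pos] Hg1l]].
      assert (Hg1range : 0 < g1 < 2 * l) by lra.
      assert (Hcyc := lattice_cyclic a b g1 l Hg1 Hg1range
                        (fun g Hg Hpos => Hlow g (conj Hg Hpos))).
      destruct (Hcyc a) as [ka Hka]; [exists 1%Z, 0%Z; ring|].
      destruct (Hcyc b) as [kb Hkb]; [exists 0%Z, 1%Z; ring|].
      assert (Hkb0 : IZR kb <> 0) by (intro Hz; rewrite Hz in Hkb; lra).
      apply Hirr. exists ka, kb. split.
      * intro Hz. apply Hkb0. rewrite Hz. reflexivity.
      * rewrite Hka, Hkb. field. lra.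
Qed.

Lemma lattice_dense (a b : R) :
  0 < b -> (~ exists p q : Z, (q <> 0)%Z /\ a / b = IZR p / IZR q) ->
  forall y eps, 0 < eps -> exists m n : Z, y < a * IZR m + b * IZR n < y + eps.
Proof.
  intros Hb Hirr y eps Heps.
  destruct (lattice_small_elements a b Hb Hirr eps Heps) as [g [Hg [Hgpos Hgeps]]].
  destruct (lattice_cell g y Hgpos) as [k Hk].
  destruct (lattice_point_mul a b g (k + 1) Hg) as [m [n Hmn]].
  exists m, n. rewrite <- Hmn, plus_IZR. nra.
Qed.

Section CantorCompactness.

(* The limit is built coordinate by coordinate, keeping at
   each step a value taken infinitely often among the terms selected so far. *)

Variable f : nat -> nat -> bool.

Definition inf_often (P : nat -> Prop) : Prop := forall K, exists k, (K <= k)%nat /\ P k.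

Definition frequent_value (P : nat -> Prop) (i : nat) : bool :=
  if excluded_middle_informative (inf_often (fun k => P k /\ f k i = true))
  then true else false.

Lemma frequent_value_inf (P : nat -> Prop) (i : nat) :
  inf_often P -> inf_often (fun k => P k /\ f k i = frequent_value P i).
Proof.
  intros HP. unfold frequent_value.
  destruct (excluded_middle_informative _) as [Htrue|Hfalse]; [exact Htrue|].
  (* true occurs only finitely often, so false occurs infinitely often *)
  assert (Hlast : exists K1, forall k, (K1 <= k)%nat -> ~ (P k /\ f k i = true)).
  { apply NNPP. intro Hno. apply Hfalse. intro K.
    apply NNPP. intro Hno'. apply Hno. exists K. intros k Hk Hk'.
    apply Hno'. exists k. split; assumption. }
  destruct Hlast as [K1 HK1]. intro K.
  destruct (HP (Nat.max K K1)) as [k [Hk HPk]].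
  exists k. split; [lia|]. split; [exact HPk|].
  destruct (f k i) eqn:E; [|reflexivity].
  exfalso. apply (HK1 k); [lia|]. split; assumption.
Qed.

Fixpoint agree_prefix (j : nat) : nat -> Prop :=
  match j with
  | O => fun _ => True
  | S j' => fun k => agree_prefix j' k /\ f k j' = frequent_value (agree_prefix j') j'
  end.

Definition limit_point (i : nat) : bool := frequent_value (agree_prefix i) i.

Lemma agree_prefix_inf (j : nat) : inf_often (agree_prefix j).
Proof.
  induction j as [|j IH].
  - intro K. exists K. split; [lia|exact I].
  - exact (frequent_value_inf (agree_prefix j) j IH).
Qed.

Lemma agree_prefix_limit (j k : nat) :
  agree_prefix j k -> forall i, (i < j)%nat -> f k i = limit_point i.
Proof.
  induction j as [|j IH]; intros Hk i Hi; [lia|].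
  destruct Hk as [Hk Hkj].
  destruct (Nat.eq_dec i j) as [->|Hne]; [exact Hkj|].
  apply IH; [exact Hk|lia].
Qed.

Lemma cantor_compact (M K : nat) :
  exists k, (K <= k)%nat /\ forall i, (i < M)%nat -> f k i = limit_point i.
Proof.
  destruct (agree_prefix_inf M K) as [k [Hk HM]].
  exists k. split; [exact Hk|]. exact (agree_prefix_limit M k HM).
Qed.

End CantorCompactness.

Definition Z_enum (i : nat) : Z :=
  if Nat.even i then Z.of_nat (Nat.div2 i) else (- Z.of_nat (Nat.div2 i) - 1)%Z.

Definition Z_index (n : Z) : nat :=
  if Z_le_dec 0 n then (2 * Z.to_nat n)%nat else (2 * Z.to_nat (- n - 1) + 1)%nat.

Lemma Z_enum_index (n : Z) : Z_enum (Z_index n) = n.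
Proof.
  unfold Z_enum, Z_index. destruct (Z_le_dec 0 n) as [Hn|Hn].
  - rewrite Nat.even_even, Nat.div2_even. lia.
  - rewrite Nat.even_odd, Nat.div2_odd'. lia.
Qed.

Lemma Z_index_bound (W : nat) (n : Z) :
  (- Z.of_nat W <= n < Z.of_nat W)%Z -> (Z_index n < 2 * W)%nat.
Proof. unfold Z_index. destruct (Z_le_dec 0 n); lia. Qed.

Lemma cantor_compact_Z (f : nat -> Z -> bool) : exists g : Z -> bool,
  forall W K : nat, exists k, (K <= k)%nat /\
    forall n, (- Z.of_nat W <= n < Z.of_nat W)%Z -> f k n = g n.
Proof.
  set (f' := fun k i => f k (Z_enum i)).
  exists (fun n => limit_point f' (Z_index n)). intros W K.
  destruct (cantor_compact f' (2 * W) K) as [k [Hk Hagree]].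
  exists k. split; [exact Hk|]. intros n Hn.
  rewrite <- (Hagree (Z_index n) (Z_index_bound W n Hn)).
  unfold f'. rewrite Z_enum_index. reflexivity.
Qed.

Lemma sign_window (v b : R) : 0 < b ->
  exists (delta : R) (n0 : Z), 0 < delta /\
    forall s n, 0 <= s < delta -> (0 <= v + s + b * IZR n <-> (n0 < n)%Z).
Proof.
  intro Hb. set (w := - v / b).
  assert (Ev : v = - (b * w)) by (unfold w; field; lra).
  (* n0 is the largest integer strictly below w *)
  set (n0 := (- Int_part (- w) - 1)%Z).
  assert (Hn0 : IZR n0 < w <= IZR n0 + 1).
  { unfold n0. rewrite minus_IZR, opp_IZR. destruct (Int_part_bounds (- w)). lra. }
  exists (b * (w - IZR n0)), n0. split; [nra|].
  intros s n Hs. split; intro H.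
  - apply Z.nle_gt. intro Hle. apply IZR_le in Hle. nra.
  - apply Zlt_le_succ, IZR_le in H. rewrite succ_IZR in H. nra.
Qed.

Lemma row_window (u b c : R) : 0 < b ->
  exists (delta : R) (n0 n1 : Z), 0 < delta /\
    forall s n, 0 <= s < delta -> (in_co c (u + s + b * IZR n) <-> (n0 < n <= n1)%Z).
Proof.
  intro Hb.
  destruct (sign_window u b Hb) as [d0 [n0 [Hd0 H0]]].
  destruct (sign_window (u - c) b Hb) as [d1 [n1 [Hd1 H1]]].
  exists (Rmin d0 d1), n0, n1. split; [apply Rmin_glb_lt; assumption|].
  intros s n Hs.
  pose proof (Rmin_l d0 d1). pose proof (Rmin_r d0 d1).
  specialize (H0 s n ltac:(lra)). specialize (H1 s n ltac:(lra)).
  unfold in_co. rewrite <- H0, Z.le_ngt, <- H1. split; intros [Hlo Hhi]; split; lra.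
Qed.

Lemma right_approximation (a b c ts : R) :
  (forall eps, 0 < eps -> exists t, S_abc a b c t /\ ts < t < ts + eps) ->
  exists (t : nat -> R) (x : nat -> Z -> bool), forall k,
    ts < t k < ts + / (INR k + 1) /\ in_B0 (x k) /\ Mx_eq_one a b c (t k) (x k).
Proof.
  intro Hacc.
  assert (Hk : forall k : nat, exists p : R * (Z -> bool),
    ts < fst p < ts + / (INR k + 1) /\ in_B0 (snd p) /\ Mx_eq_one a b c (fst p) (snd p)).
  { intro k. assert (Hpos : 0 < / (INR k + 1))
      by (apply Rinv_0_lt_compat; pose proof (pos_INR k); lra).
    destruct (Hacc _ Hpos) as [t [[x [Hx0 Hx]] Ht]].
    exists (t, x). split; [|split]; assumption. }
  destruct (choice _ Hk) as [seq Hseq].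
  exists (fun k => fst (seq k)), (fun k => snd (seq k)). exact Hseq.
Qed.

Lemma inv_succ_small (delta : R) : 0 < delta ->
  exists K : nat, forall k, (K <= k)%nat -> / (INR k + 1) < delta.
Proof.
  intro Hd. destruct (INR_unbounded (/ delta)) as [K HK]. exists K.
  intros k Hk. apply le_INR in Hk.
  rewrite <- (Rinv_inv delta). apply Rinv_lt_contravar.
  - apply Rmult_lt_0_compat; [apply Rinv_0_lt_compat; exact Hd|].
    pose proof (pos_INR k). lra.
  - lra.
Qed.

(* A limit point g of their solutions (compactness) solves the system at ts,
   since each row only sees finitely many entries, which are stable near ts. *)
Lemma S_abc_right_closed (a b c ts : R) : 0 < b ->
  (forall eps, 0 < eps -> exists t, S_abc a b c t /\ ts < t < ts + eps) -> S_abc a b c ts.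
Proof.
  intros Hb Hacc.
  destruct (right_approximation a b c ts Hacc) as [t [x Hseq]].
  destruct (cantor_compact_Z x) as [g Hg].
  exists g. split.
  - destruct (Hg 1%nat 0%nat) as [k [_ Hk]].
    destruct (Hseq k) as [_ [Hx0 _]].
    unfold in_B0 in *. rewrite <- Hk; [exact Hx0|simpl; lia].
  - intro m.
    destruct (row_window (ts - a * IZR m) b c Hb) as [delta [n0 [n1 [Hdelta Hwin]]]].
    assert (Hwin' : forall t', ts <= t' < ts + delta -> forall n,
              in_co c (t' - a * IZR m + b * IZR n) <-> (n0 < n <= n1)%Z).
    { intros t' Ht' n.
      replace (t' - a * IZR m + b * IZR n)
        with (ts - a * IZR m + (t' - ts) + b * IZR n) by ring.
      apply Hwin. lra. }
    destruct (inv_succ_small delta Hdelta) as [K HK].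
    destruct (Hg (Z.to_nat (Z.abs n0 + Z.abs n1 + 1)) K) as [k [HkK Hk]].
    destruct (Hseq k) as [Htk [_ Hxk]].
    specialize (HK k HkK).
    apply (row_transfer a b c (t k) ts (x k) g m); [| |apply Hxk].
    + intro n. rewrite (Hwin' (t k)), (Hwin' ts) by lra. reflexivity.
    + intros n Hn. apply Hk. rewrite (Hwin' (t k)) in Hn by lra. lia.
Qed.

Lemma uniform_radius (P : Z -> R -> Prop) (N : Z) :
  (forall j e e', 0 < e' <= e -> P j e -> P j e') ->
  (forall j, (0 <= j <= N)%Z -> exists e, 0 < e /\ P j e) ->
  exists e, 0 < e /\ forall j, (0 <= j <= N)%Z -> P j e.
Proof.
  intros Hmono Hex.
  assert (Hupto : forall M : nat, exists e, 0 < e /\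
            forall j, (0 <= j < Z.of_nat M)%Z -> (j <= N)%Z -> P j e).
  { induction M as [|M [e [He HPe]]].
    - exists 1. split; [lra|]. intros j Hj. lia.
    - destruct (Z_le_gt_dec (Z.of_nat M) N) as [HMN|HMN].
      + destruct (Hex (Z.of_nat M) ltac:(lia)) as [e' [He' HPe']].
        assert (Hmin : 0 < Rmin e e') by (apply Rmin_glb_lt; assumption).
        pose proof (Rmin_l e e'). pose proof (Rmin_r e e').
        exists (Rmin e e'). split; [exact Hmin|].
        intros j Hj HjN. destruct (Z.eq_dec j (Z.of_nat M)) as [->|Hne].
        * apply (Hmono _ e'); [split|]; assumption.
        * apply (Hmono _ e); [split|apply HPe]; (assumption || lia).
      + exists e. split; [exact He|]. intros j Hj HjN. apply HPe; lia. }
  destruct (Hupto (S (Z.to_nat N))) as [e [He HPe]].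
  exists e. split; [exact He|]. intros j Hj. apply HPe; lia.
Qed.

Section IrrationalCase.

Variables (a b c : R) (N : Z).
Hypotheses (Ha : 0 < a) (Hab : a < b) (Hc0 : c - IZR N * b < a)
           (Hirr : ~ exists p q : Z, (q <> 0)%Z /\ a / b = IZR p / IZR q).

(* For every y, S accumulates from the right at one of y, y - b, ..., y - N b:
   otherwise a common gap to the right of all of them would contain, by density
   of aZ + bZ and the reduction lemma, a translate of a point of S. *)
Lemma right_accumulation (t0 y : R) : S_abc a b c t0 ->
  exists j : Z, (0 <= j <= N)%Z /\
    forall eps, 0 < eps -> exists t, S_abc a b c t /\ y - b * IZR j < t < y - b * IZR j + eps.
Proof.
  intros HS0. apply NNPP. intro Hnone.
  set (gap := fun j eps => forall t, S_abc a b c t -> ~ (y - b * IZR j < t < y - b * IZR j + eps)).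
  destruct (uniform_radius gap N) as [eps [Heps Hgap]].
  - intros j e e' He' Hgap t Ht Hin. apply (Hgap t Ht). lra.
  - intros j Hj.
    destruct (not_all_ex_not _ _ (fun H => Hnone (ex_intro _ j (conj Hj H)))) as [e He].
    destruct (imply_to_and _ _ He) as [Hepos Hno].
    exists e. split; [exact Hepos|]. intros t Ht Hin. apply Hno. exists t. split; assumption.
  - destruct (lattice_dense a b ltac:(lra) Hirr (y - t0) eps Heps) as [m [n Hmn]].
    destruct (reduce_translate a b c N Ha Hab Hc0 t0 m n HS0) as [j [Hj [HSj _]]].
    apply (Hgap j Hj _ HSj). lra.
Qed.

Lemma irrational_cover (t0 : R) : S_abc a b c t0 -> lattice_translates_cover a b c.
Proof.
  intros HS0 y.
  destruct (right_accumulation t0 y HS0) as [j [_ Hacc]].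
  exists (y - b * IZR j), 0%Z, j. split.
  - apply S_abc_right_closed; [lra|exact Hacc].
  - ring.
Qed.

End IrrationalCase.

Theorem theorem5p3 (a b c : R) :
  0 < a -> a < b -> b < c ->
  (2 <= floorR (c / b))%Z ->
  let N := floorR (c / b) in
  let c0 := c - IZR N * b in
  let c1 := c - c0 - IZR (floorR ((c - c0) / a)) * a in
  b - a < c0 -> c0 < a ->
  0 <= c1 -> c1 <= 2 * a - b ->
  (exists t : R, S_abc a b c t) ->
  ((~ exists p q : Z, (q <> 0)%Z /\ a / b = IZR p / IZR q) \/
   (exists p q : Z, (0 < p)%Z /\ (0 < q)%Z /\ Z.gcd p q = 1%Z /\
      a / b = IZR p / IZR q /\ exists k : Z, c = IZR k * (b / IZR q))) ->
  forall y : R,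
    (exists t : R, S_abc a b c t /\
       (exists (s : R) (j : Z), 0 <= s < c0 + a - b /\ t = s + a * IZR j) /\
       y = t + IZR N * b)
    \/
    (exists k : Z, (0 <= k <= N - 1)%Z /\
       exists t : R, S_abc a b c t /\ y = t + IZR k * b).
Proof.
  intros Ha Hab _ _ N c0 c1 _ Hc0 _ _ [t0 HS0] Hcase y.
  assert (Hcover : lattice_translates_cover a b c).
  { destruct Hcase as [Hirr | [p [q [_ [Hq [Hgcd [Hpq [k Hk]]]]]]]].
    - exact (irrational_cover a b c N Ha Hab Hc0 Hirr t0 HS0).
    - apply (rational_cover a b c p q k t0); [lra|assumption..]. }
  destruct (Hcover y) as [t [m [n [HS Hy]]]].
  destruct (reduce_translate a b c N Ha Hab Hc0 t m n HS) as [j [Hj [HSj Hextreme]]].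
  rewrite <- Hy in HSj, Hextreme.
  destruct (Z.eq_dec j N) as [->|Hne].
  - left. exists (y - b * IZR N). split; [exact HSj|].
    split; [exact (Hextreme eq_refl)|ring].
  - right. exists j. split; [lia|].
    exists (y - b * IZR j). split; [exact HSj|ring].
Qed.
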